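(* Let $\mathcal V$ be a congruence modular variety, $\mathbb A\in\mathcal V$, $k\neq l\in\mathbb N$, and let $R\le\mathbb A^{2^{\{k,l\}}}$ be a $(2)$-dimensional tolerance of $\mathbb A$. If $\mathrm{face}_k^0(R)$ (viewed as a binary relation on $A$) is a congruence of $\mathbb A$ and $\mathrm{face}_k(R)$ is a congruence of the algebra $\mathrm{face}_k^0(R)$ (a subalgebra of $\mathbb A^2$), then $R$ is a $(2)$-dimensional congruence of $\mathbb A$.
   Context: Cube notation. $2=\{0,1\}$; for finite $S\subseteq\mathbb N$, $2^S$ is the set of functions $S\to 2$ and an $(S)$-cube over $A$ is $\gamma=(\gamma_f)_{f\in2^S}\in A^{2^S}$. For $i\in S$, $j\in 2$: $\mathrm{face}_i^j(\gamma)\in A^{2^{S\setminus\{i\}}}$ is $g\mapsto\gamma_{g\cup\{(i,j)\}}$; $\mathrm{glue}_{\{i\}}(\zeta,\eta)$ is the unique cube with $\mathrm{face}_i^0=\zeta$, $\mathrm{face}_i^1=\eta$; $\mathrm{refl}_i^j(\gamma)=\mathrm{glue}_{\{i\}}(\mathrm{face}_i^j\gamma,\mathrm{face}_i^j\gamma)$; $\mathrm{sym}_i(\gamma)=\mathrm{glue}_{\{i\}}(\mathrm{face}_i^1\gamma,\mathrm{face}_i^0\gamma)$. For $R\subseteq A^{2^S}$, $\mathrm{face}_i^j(R)=\{\mathrm{face}_i^j(\gamma):\gamma\in R\}$ and $\mathrm{face}_i(R)=\{(\mathrm{face}_i^0\gamma,\mathrm{face}_i^1\gamma):\gamma\in R\}$.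 A $(\{l\})$-cube $\zeta$ is identified with the pair $(\zeta_{\{(l,0)\}},\zeta_{\{(l,1)\}})$. With $|S|=n$: a subuniverse $R$ of $\mathbb A^{2^S}$ is an $(n)$-dimensional tolerance of $\mathbb A$ if $\mathrm{refl}_i^j(\gamma),\mathrm{sym}_i(\gamma)\in R$ for all $\gamma\in R$, $i\in S$, $j\in 2$; it is an $(n)$-dimensional congruence if moreover $\mathrm{face}_i(R)$ is a transitive relation for every $i\in S$. *)

From mathcomp Require Import ssreflect ssrfun ssrbool eqtype ssrnat fintype.
Set Implicit Arguments.
Unset Strict Implicit.
Unset Printing Implicit Defensive.

Record signature := Signature { op :> Type; arity : op -> nat }.

Definition ops_on (sg : signature) (T : Type) :=
  forall o : sg, ('I_(arity o) -> T) -> T.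

Inductive term (sg : signature) : Type :=
| Var : nat -> term sg
| App : forall o : sg, ('I_(arity o) -> term sg) -> term sg.

Fixpoint eval (sg : signature) (T : Type) (I : ops_on sg T) (env : nat -> T)
  (t : term sg) : T :=
  match t with
  | Var n => env n
  | App o args => I o (fun i => eval I env (args i))
  end.

Definition models (sg : signature) (Sigma : term sg -> term sg -> Prop)
  (T : Type) (I : ops_on sg T) : Prop :=
  forall s t, Sigma s t -> forall env : nat -> T, eval I env s = eval I env t.

Definition rel (T : Type) := T -> T -> Prop.

Definition subuniverse (sg : signature) (T : Type) (I : ops_on sg T)
  (P : T -> Prop) : Prop :=
  forall (o : sg) (args : 'I_(arity o) -> T),
    (forall i, P (args i)) -> P (I o args).

Definition congruence_in (sg : signature) (T : Type) (I : ops_on sg T)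
  (P : T -> Prop) (th : rel T) : Prop :=
  [/\ (forall x y, th x y -> P x /\ P y),
      (forall x, P x -> th x x),
      (forall x y, th x y -> th y x),
      (forall x y z, th x y -> th y z -> th x z) &
      (forall (o : sg) (a b : 'I_(arity o) -> T),
          (forall i, th (a i) (b i)) -> th (I o a) (I o b))].

Definition congruence (sg : signature) (T : Type) (I : ops_on sg T)
  (th : rel T) : Prop := congruence_in I (fun _ => True) th.

Definition cmeet (T : Type) (a b : rel T) : rel T := fun x y => a x y /\ b x y.
Definition cjoin (sg : signature) (T : Type) (I : ops_on sg T) (a b : rel T)
  : rel T :=
  fun x y => forall th, congruence I th ->
    (forall u v, a u v -> th u v) -> (forall u v, b u v -> th u v) -> th x y.

Definition con_modular (sg : signature) (T : Type) (I : ops_on sg T) : Prop :=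
  forall a b c : rel T, congruence I a -> congruence I b -> congruence I c ->
    (forall x y, a x y -> c x y) ->
    forall x y, cjoin I a (cmeet b c) x y <-> cmeet (cjoin I a b) c x y.

Definition cm_variety (sg : signature) (Sigma : term sg -> term sg -> Prop)
  : Prop :=
  forall (B : Type) (J : ops_on sg B), models Sigma J -> con_modular J.

(** A ({k,l})-cube over A, i.e. an element of A^(2^{k,l}), is represented as
    [g : bool -> bool -> A] with [g a b] = g_f where f(k) = a, f(l) = b
    (false = 0, true = 1). *)
Definition square (A : Type) := bool -> bool -> A.

Definition ops_pair (sg : signature) (A : Type) (I : ops_on sg A)
  : ops_on sg (A * A) :=
  fun o args => (I o (fun i => (args i).1), I o (fun i => (args i).2)).

Definition ops_square (sg : signature) (A : Type) (I : ops_on sg A)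
  : ops_on sg (square A) :=
  fun o args => fun a b => I o (fun i => args i a b).

Definition face_k (A : Type) (j : bool) (g : square A) : A * A := (g j false, g j true).
Definition face_l (A : Type) (j : bool) (g : square A) : A * A := (g false j, g true j).

Definition refl_k (A : Type) (j : bool) (g : square A) : square A := fun _ b => g j b.
Definition refl_l (A : Type) (j : bool) (g : square A) : square A := fun a _ => g a j.
Definition sym_k (A : Type) (g : square A) : square A := fun a b => g (~~ a) b.
Definition sym_l (A : Type) (g : square A) : square A := fun a b => g a (~~ b).

Definition faceR_k (A : Type) (j : bool) (R : square A -> Prop) : rel A :=
  fun x y => exists g, R g /\ face_k j g = (x, y).
Definition faceR_l (A : Type) (j : bool) (R : square A -> Prop) : rel A :=
  fun x y => exists g, R g /\ face_l j g = (x, y).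

Definition facesR_k (A : Type) (R : square A -> Prop) : rel (A * A) :=
  fun p q => exists g, R g /\ face_k false g = p /\ face_k true g = q.
Definition facesR_l (A : Type) (R : square A -> Prop) : rel (A * A) :=
  fun p q => exists g, R g /\ face_l false g = p /\ face_l true g = q.

Definition transitive_rel (T : Type) (r : rel T) : Prop :=
  forall x y z, r x y -> r y z -> r x z.

Definition tolerance2 (sg : signature) (A : Type) (I : ops_on sg A)
  (R : square A -> Prop) : Prop :=
  [/\ subuniverse (ops_square I) R,
      (forall g j, R g -> R (refl_k j g)),
      (forall g j, R g -> R (refl_l j g)),
      (forall g, R g -> R (sym_k g)) &
      (forall g, R g -> R (sym_l g))].

Definition congruence2 (sg : signature) (A : Type) (I : ops_on sg A)
  (R : square A -> Prop) : Prop :=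
  [/\ tolerance2 I R, transitive_rel (facesR_k R) & transitive_rel (facesR_l R)].

From Stdlib Require Import FunctionalExtensionality ProofIrrelevance.
From mathcomp Require Import ssreflect ssrfun ssrbool eqtype ssrnat fintype.

Set Implicit Arguments.
Unset Strict Implicit.
Unset Printing Implicit Defensive.

(** Since θ is transitive by hypothesis, what remains is transitivity of
    face_l(R).  In terms of θ this is the composition property
        (a,c) θ (b,d)  and  (c,e) θ (d,f)   imply   (a,e) θ (b,f).
    We prove it inside the algebra C of α-chains (x0,x1,x2), x0 α x1 α x2,
    a subalgebra of A^3 and therefore a member of the congruence modular
    variety.  Pulling θ back along the projections (x0,x1), (x1,x2) and
    (x0,x2) gives congruences θL, θR, θE of C, and the composition property
    says exactly θL ∧ θR ≤ θE.  This follows from two applications of the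
    Shifting Lemma, using the kernels of the projections (x1,x2) and (x0,x1). *)

Section UniversalAlgebra.
Variable sg : signature.

Definition hom (T B : Type) (J : ops_on sg T) (JB : ops_on sg B) (f : T -> B) :
    Prop :=
  forall o args, f (J o args) = JB o (fun i => f (args i)).

Lemma eval_hom (T B : Type) (J : ops_on sg T) (JB : ops_on sg B) (f : T -> B)
    (Hf : hom J JB f) (env : nat -> T) (t : term sg) :
  f (eval J env t) = eval JB (fun n => f (env n)) t.
Proof.
elim: t => [n|o args IH] //=.
by rewrite Hf; congr (JB o _); apply: functional_extensionality.
Qed.

Definition ops_prod (T1 T2 : Type) (J1 : ops_on sg T1) (J2 : ops_on sg T2) :
    ops_on sg (T1 * T2) :=
  fun o args => (J1 o (fun i => (args i).1), J2 o (fun i => (args i).2)).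

Lemma models_prod (Sigma : term sg -> term sg -> Prop) (T1 T2 : Type)
    (J1 : ops_on sg T1) (J2 : ops_on sg T2) :
  models Sigma J1 -> models Sigma J2 -> models Sigma (ops_prod J1 J2).
Proof.
move=> HJ1 HJ2 s t st env.
have fst_hom : hom (ops_prod J1 J2) J1 fst by [].
have snd_hom : hom (ops_prod J1 J2) J2 snd by [].
apply: injective_projections.
- by rewrite !(eval_hom fst_hom); apply: HJ1.
- by rewrite !(eval_hom snd_hom); apply: HJ2.
Qed.

Definition sub_ops (T : Type) (J : ops_on sg T) (P : T -> Prop)
    (HP : subuniverse J P) : ops_on sg {x | P x} :=
  fun o args =>
    exist P (J o (fun i => sval (args i))) (HP o _ (fun i => svalP (args i))).

(** Varieties are closed under subalgebras; elements of the subalgebra are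
    identified with their values by proof irrelevance. *)
Lemma models_sub (Sigma : term sg -> term sg -> Prop) (T : Type)
    (J : ops_on sg T) (P : T -> Prop) (HP : subuniverse J P) :
  models Sigma J -> models Sigma (sub_ops HP).
Proof.
move=> HJ s t st env.
have val_hom : hom (sub_ops HP) J sval by [].
apply: eq_sig_hprop => [x p q|]; first exact: proof_irrelevance.
by rewrite !(eval_hom val_hom); apply: HJ.
Qed.

Lemma congruence_meet (T : Type) (J : ops_on sg T) (a b : rel T) :
  congruence J a -> congruence J b -> congruence J (cmeet a b).
Proof.
case=> _ ra sa ta ca [_ rb sb tb cb]; split=> //.
- by move=> x _; split; [apply: ra | apply: rb].
- by move=> x y [a_xy b_xy]; split; [apply: sa | apply: sb].
- move=> x y z [a_xy b_xy] [a_yz b_yz].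
  by split; [exact: (ta _ _ _ a_xy a_yz) | exact: (tb _ _ _ b_xy b_yz)].
- by move=> o u v H; split; [apply: ca | apply: cb] => i; case: (H i).
Qed.

Lemma congruence_preimage (T B : Type) (J : ops_on sg T) (JB : ops_on sg B)
    (P : B -> Prop) (th : rel B) (f : T -> B) :
  hom J JB f -> (forall x, P (f x)) -> congruence_in JB P th ->
  congruence J (fun x y => th (f x) (f y)).
Proof.
move=> Hf fP [_ th_refl th_sym th_trans th_comp]; split=> //.
- by move=> x _; apply: th_refl.
- by move=> x y; apply: th_sym.
- by move=> x y z; apply: th_trans.
- by move=> o a b Hab; rewrite !Hf; apply: th_comp.
Qed.

Lemma congruence_kernel (T B : Type) (J : ops_on sg T) (JB : ops_on sg B)
    (f : T -> B) :
  hom J JB f -> congruence J (fun x y => f x = f y).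
Proof.
move=> Hf; split=> //; first by move=> x y z -> ->.
move=> o a b Hab; rewrite !Hf; congr (JB o _).
exact: functional_extensionality.
Qed.

(** Indeed (x, y) lies in α and in
    (α ∧ γ) ∨ β, hence by modularity in (α ∧ γ) ∨ (β ∧ α) ≤ γ. *)
Lemma shifting (T : Type) (J : ops_on sg T) (Hmod : con_modular J)
    (al be ga : rel T) :
  congruence J al -> congruence J be -> congruence J ga ->
  (forall x y, al x y -> be x y -> ga x y) ->
  forall x y x' y', al x y -> al x' y' -> be x x' -> be y y' -> ga x' y' ->
  ga x y.
Proof.
move=> Cal Cbe Cga al_be_ga x y x' y' al_xy al_x'y' be_xx' be_yy' ga_x'y'.
have in_join : cjoin J (cmeet al ga) (cmeet be al) x y.
  have meet_le_al : forall u v, cmeet al ga u v -> al u v by move=> u v [].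
  apply: (proj2 (Hmod _ _ _ (congruence_meet Cal Cga) Cbe Cal meet_le_al x y)).
  split=> // th Cth th_alga th_be.
  have [_ _ th_sym th_trans _] := Cth.
  apply: (th_trans _ _ _ (th_be _ _ be_xx')).
  apply: (th_trans _ _ _ (th_alga _ _ (conj al_x'y' ga_x'y'))).
  exact/th_sym/th_be.
apply: (in_join ga Cga) => [u v [] // | u v [be_uv al_uv]].
exact: al_be_ga.
Qed.

End UniversalAlgebra.

Section Chains.
Variables (sg : signature) (A : Type) (I : ops_on sg A) (al : rel A).
Hypothesis Hal : congruence I al.

Lemma al_refl (x : A) : al x x.
Proof. by case: Hal => _ al_r _ _ _; apply: al_r. Qed.

Definition is_chain (t : A * A * A) : Prop := al t.1.1 t.1.2 /\ al t.1.2 t.2.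
Definition chain : Type := {t | is_chain t}.

Lemma chain_subuniverse : subuniverse (ops_prod (ops_pair I) I) is_chain.
Proof.
case: Hal => _ _ _ _ al_comp o args chain_args.
by split; apply: al_comp => i; case: (chain_args i).
Qed.

Definition chain_ops : ops_on sg chain := sub_ops chain_subuniverse.

Lemma models_chain (Sigma : term sg -> term sg -> Prop) :
  models Sigma I -> models Sigma chain_ops.
Proof.
move=> HA; apply: models_sub.
exact: (models_prod (models_prod HA HA) HA).
Qed.

Definition chain_L (u : chain) : A * A := ((sval u).1.1, (sval u).1.2).
Definition chain_R (u : chain) : A * A := ((sval u).1.2, (sval u).2).
Definition chain_E (u : chain) : A * A := ((sval u).1.1, (sval u).2).

Lemma chain_E_al (u : chain) : al (chain_E u).1 (chain_E u).2.
Proof.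
case: Hal => _ _ _ al_trans _; case: (svalP u) => al01 al12.
exact: al_trans al01 al12.
Qed.

Lemma chain_L_hom : hom chain_ops (ops_pair I) chain_L. Proof. by []. Qed.
Lemma chain_R_hom : hom chain_ops (ops_pair I) chain_R. Proof. by []. Qed.
Lemma chain_E_hom : hom chain_ops (ops_pair I) chain_E. Proof. by []. Qed.

Definition collapse_left (u : chain) : chain :=
  exist is_chain ((sval u).1.2, (sval u).1.2, (sval u).2)
        (conj (al_refl _) (proj2 (svalP u))).
Definition collapse_right (u : chain) : chain :=
  exist is_chain ((sval u).1.1, (sval u).1.2, (sval u).1.2)
        (conj (proj1 (svalP u)) (al_refl _)).

Variable th : rel (A * A).
Hypothesis Hth : congruence_in (ops_pair I) (fun p => al p.1 p.2) th.
Hypothesis th_diag : forall a b c d, th (a, c) (b, d) -> th (c, c) (d, d).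
Hypothesis Hmod : con_modular chain_ops.

Lemma congruence_thL :
  congruence chain_ops (fun u v => th (chain_L u) (chain_L v)).
Proof.
apply: congruence_preimage chain_L_hom _ Hth => u.
exact: (proj1 (svalP u)).
Qed.

Lemma congruence_thR :
  congruence chain_ops (fun u v => th (chain_R u) (chain_R v)).
Proof.
apply: congruence_preimage chain_R_hom _ Hth => u.
exact: (proj2 (svalP u)).
Qed.

Lemma congruence_thE :
  congruence chain_ops (fun u v => th (chain_E u) (chain_E v)).
Proof.
exact: congruence_preimage chain_E_hom chain_E_al Hth.
Qed.

(** θL ∧ ker(x1,x2) ≤ θE: shift along ker(x0,x1) to the collapsed chains
    (x0,x1,x1), where θL and θE agree. *)
Lemma thE_of_thL_same_tail (u v : chain) :
  chain_R u = chain_R v -> th (chain_L u) (chain_L v) ->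
  th (chain_E u) (chain_E v).
Proof.
move=> eR thL_uv.
have [_ th_refl _ _ _] := Hth.
have C_al := congruence_meet (congruence_kernel chain_R_hom) congruence_thL.
have C_be := congruence_kernel chain_L_hom.
apply: (shifting Hmod C_al C_be congruence_thE _ (x := u) (y := v)
          (x' := collapse_right u) (y' := collapse_right v)) => //.
- move=> x y [[_ e2] _] [e0 _].
  rewrite /chain_E e0 e2; apply: th_refl.
  exact: chain_E_al.
- split; last exact: thL_uv.
  by case: eR => e1 _; rewrite /chain_R /= e1.
Qed.

(** θL ∧ θR ≤ θE: shift along ker(x1,x2) to the collapsed chains
    (x1,x1,x2), where θR and θE agree. *)
Lemma thE_of_thL_thR (u v : chain) :
  th (chain_L u) (chain_L v) -> th (chain_R u) (chain_R v) ->
  th (chain_E u) (chain_E v).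
Proof.
move=> thL_uv thR_uv.
have C_al := congruence_meet congruence_thL congruence_thR.
have C_be := congruence_kernel chain_R_hom.
apply: (shifting Hmod C_al C_be congruence_thE _ (x := u) (y := v)
          (x' := collapse_left u) (y' := collapse_left v)) => //.
- by move=> x y [thL_xy _] eR; apply: thE_of_thL_same_tail eR thL_xy.
- by split=> //; apply: th_diag thL_uv.
Qed.

Lemma th_compose (a b c d e f : A) :
  th (a, c) (b, d) -> th (c, e) (d, f) -> th (a, e) (b, f).
Proof.
move=> th_acbd th_cedf.
case: Hth => th_sub _ _ _ _.
have [al_ac al_bd] := th_sub _ _ th_acbd.
have [al_ce al_df] := th_sub _ _ th_cedf.
exact: (@thE_of_thL_thR (exist is_chain (a, c, e) (conj al_ac al_ce))
                        (exist is_chain (b, d, f) (conj al_bd al_df))).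
Qed.

End Chains.

Lemma facesR_k_diag (A : Type) (R : square A -> Prop) :
  (forall g j, R g -> R (refl_l j g)) ->
  forall a b c d, facesR_k R (a, c) (b, d) -> facesR_k R (c, c) (d, d).
Proof.
move=> refl_closed a b c d [g [Rg [[_ gc] [_ gd]]]].
exists (refl_l true g); split; first exact: refl_closed.
by rewrite /face_k /refl_l gc gd.
Qed.

(** Transitivity of face_l(R) is the composition property of face_k(R):
    gluing a square g to a square h along g's second l-face. *)
Lemma facesR_l_transitive (A : Type) (R : square A -> Prop) :
  (forall a b c d e f, facesR_k R (a, c) (b, d) -> facesR_k R (c, e) (d, f) ->
     facesR_k R (a, e) (b, f)) ->
  transitive_rel (facesR_l R).
Proof.
move=> compose _ q _ [g [Rg [<- gq]]] [h [Rh [hq <-]]].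
have Hg : facesR_k R (g false false, g false true) (g true false, g true true).
  by exists g.
have Hh : facesR_k R (h false false, h false true) (h true false, h true true).
  by exists h.
move: gq; rewrite -hq => -[e0 e1]; rewrite e0 e1 in Hg.
have [m [Rm [[m00 m01] [m10 m11]]]] := compose _ _ _ _ _ _ Hg Hh.
by exists m; rewrite /face_l m00 m01 m10 m11.
Qed.

Theorem lemma2p8 (sg : signature) (Sigma : term sg -> term sg -> Prop)
  (HV : cm_variety Sigma)
  (A : Type) (I : ops_on sg A) (HA : models Sigma I)
  (k l : nat) (Hkl : k <> l)
  (R : square A -> Prop) (HR : tolerance2 I R)
  (H0 : congruence I (faceR_k false R))
  (H1 : congruence_in (ops_pair I) (fun p => faceR_k false R p.1 p.2)
          (facesR_k R)) :
  congruence2 I R.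
Proof.
have [_ _ refl_l_closed _ _] := HR.
have [_ _ _ face_k_trans _] := H1.
have Hmod : con_modular (chain_ops H0).
  by apply: HV; apply: models_chain.
split=> //; apply: facesR_l_transitive => a b c d e f.
exact: (th_compose (Hal := H0) H1 (facesR_k_diag refl_l_closed) Hmod).
Qed.
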